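(* Let $n\ge3$, $-2<l<0$, $1<p<\frac{n+2}{n-2}$, and let $f$ satisfy $(f_1)$, $(f_2)$, $(f_2')$. For $k>1$ and $\alpha>0$ let $r_{\alpha,k}=\inf\{r>0:u(r;\alpha)=\alpha/k\}$. Then $\lim_{\alpha\to0}r_{\alpha,k}=\infty$.
   Context: Standing hypotheses: $(f_1)$ $f\in C(0,\infty)$, $f(r)>0$ for $r>0$; $(f_2)$ $f(r)$ comparable to $r^l$ for large $r$, $-2<l<0$; $(f_2')$ $f(r)=O(r^\sigma)$ as $r\to0$, $\sigma>-2$. For $\alpha>0$, $u(r;\alpha)$ is the unique solution of (1.4) $u''+\frac{n-1}{r}u'+f(r)(u^+)^p=0$, $u(0;\alpha)=\alpha$, $u'(0;\alpha)=0$, $u^+=\max\{u,0\}$. *)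

From Stdlib Require Import Reals.
From Coquelicot Require Import Coquelicot.
Open Scope R_scope.

(* x^p for real p, extended by 0 for x <= 0 (used as (u^+)^p). *)
Definition pospow (x p : R) : R := if Rlt_dec 0 x then Rpower x p else 0.

Definition hyp_f1 (f : R -> R) : Prop :=
  forall r, 0 < r -> continuous f r /\ 0 < f r.

Definition hyp_f2 (l : R) (f : R -> R) : Prop :=
  exists c1 c2 R0, 0 < c1 /\ 0 < c2 /\ 0 < R0 /\
    forall r, R0 <= r -> c1 * Rpower r l <= f r <= c2 * Rpower r l.

Definition hyp_f2' (f : R -> R) : Prop :=
  exists sigma C delta, -2 < sigma /\ 0 < delta /\
    forall r, 0 < r < delta -> Rabs (f r) <= C * Rpower r sigma.

(* v is a (global, radial) solution of (1.4):
   v'' + (n-1)/r v' + f(r) (v^+)^p = 0 on (0,oo), v(0) = alpha, v'(0) = 0.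
   The initial condition v'(0)=0 is read as r^(n-1) v'(r) -> 0 as r -> 0+
   (equivalently, the usual integral-equation formulation). *)
Definition radial_solution (n : nat) (f : R -> R) (p alpha : R) (v : R -> R) : Prop :=
  v 0 = alpha /\
  filterlim v (at_right 0) (locally alpha) /\
  (forall r, 0 < r ->
     ex_derive v r /\ ex_derive (Derive v) r /\
     Derive (Derive v) r + (INR n - 1) / r * Derive v r + f r * pospow (v r) p = 0) /\
  filterlim (fun r => r ^ (n - 1) * Derive v r) (at_right 0) (locally 0).

(* r_{alpha,k} = inf { r > 0 : u(r;alpha) = alpha/k } in Rbar (inf of empty set = +oo). *)
Definition r_alpha_k (u : R -> R -> R) (k alpha : R) : Rbar :=
  Glb_Rbar (fun r => 0 < r /\ u r alpha = alpha / k).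

(** The flux [r^(n-1) u'] starts at 0 and is nonincreasing, so [u] decreases from
    [alpha] and [(u^+)^p <= alpha^p].  Near the origin [f <= C r^sigma + B] with
    [sigma > -2], by (f_2') and continuity, so integrating the equation twice gives
    [u(r) >= alpha - alpha^p K(b)] on [(0, b]].  As [p > 1], [alpha^(p-1) K(b) < 1 - 1/k]
    for small [alpha]; then [u > alpha/k] on [(0, b]], hence [r_{alpha,k} >= b]. *)

From Stdlib Require Import Reals Lra Lia.
From Coquelicot Require Import Coquelicot.
Open Scope R_scope.

Lemma filterlim_Rplus {T : Type} {F : (T -> Prop) -> Prop} {FF : Filter F}
  (f g : T -> R) (a b : R) :
  filterlim f F (locally a) -> filterlim g F (locally b) ->
  filterlim (fun x => f x + g x) F (locally (a + b)).
Proof. intros Hf Hg. exact (filterlim_comp_2 f g Rplus Hf Hg (filterlim_plus a b)). Qed.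

Lemma filterlim_Rminus {T : Type} {F : (T -> Prop) -> Prop} {FF : Filter F}
  (f g : T -> R) (a b : R) :
  filterlim f F (locally a) -> filterlim g F (locally b) ->
  filterlim (fun x => f x - g x) F (locally (a - b)).
Proof.
  intros Hf Hg. apply filterlim_Rplus; [exact Hf|].
  exact (filterlim_comp _ _ _ g Ropp _ _ _ Hg (filterlim_opp b)).
Qed.

Lemma filterlim_Rmult_l {T : Type} {F : (T -> Prop) -> Prop} {FF : Filter F}
  (c : R) (f : T -> R) (a : R) :
  filterlim f F (locally a) -> filterlim (fun x => c * f x) F (locally (c * a)).
Proof. intros Hf. exact (filterlim_comp _ _ _ f (Rmult c) _ _ _ Hf (filterlim_scal_r c a)). Qed.

Lemma at_right_0_between (r : R) : 0 < r -> at_right 0 (fun y => 0 < y < r).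
Proof.
  intros Hr. unfold at_right, within.
  apply (filter_imp (fun y => y < r)); [|exact (open_lt r 0 Hr)].
  intros y Hy Hy0. split; assumption.
Qed.

Lemma filterlim_Rpower_at_right_0 (c : R) :
  0 < c -> filterlim (fun x => Rpower x c) (at_right 0) (locally 0).
Proof.
  intros Hc. unfold Rpower.
  eapply filterlim_comp; [|exact is_lim_exp_m].
  eapply filterlim_comp; [exact is_lim_ln_0|].
  replace (Rbar_locally' m_infty) with (Rbar_locally (Rbar_mult c m_infty)).
  - exact (filterlim_Rbar_mult_l c m_infty).
  - simpl. case Rle_dec; [intros; case Rle_lt_or_eq_dec; [reflexivity| lra] | lra].
Qed.

Lemma filterlim_sub_powers_at_right_0 (L s a1 c1 a2 c2 : R) :
  0 < c1 -> 0 < c2 ->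
  filterlim (fun x => L - s * (a1 * Rpower x c1 + a2 * Rpower x c2)) (at_right 0) (locally L).
Proof.
  intros Hc1 Hc2.
  replace (locally L) with (locally (L - s * (a1 * 0 + a2 * 0))) by (f_equal; ring).
  apply filterlim_Rminus; [apply filterlim_const|].
  apply filterlim_Rmult_l, filterlim_Rplus; apply filterlim_Rmult_l;
    now apply filterlim_Rpower_at_right_0.
Qed.

Lemma is_derive_Rpower (c x : R) : 0 < x -> is_derive (fun y => Rpower y c) x (c * Rpower x (c - 1)).
Proof. intros Hx. apply is_derive_Reals, derivable_pt_lim_power, Hx. Qed.

Lemma is_derive_sub_powers (L s a1 c1 a2 c2 x : R) : 0 < x ->
  is_derive (fun y => L - s * (a1 * Rpower y c1 + a2 * Rpower y c2)) x
    (- s * (a1 * c1 * Rpower x (c1 - 1) + a2 * c2 * Rpower x (c2 - 1))).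
Proof.
  intros Hx.
  pose proof (is_derive_minus _ _ x _ _ (is_derive_const L x)
    (is_derive_scal _ x s _ (is_derive_plus _ _ x _ _
       (is_derive_scal _ x a1 _ (is_derive_Rpower c1 x Hx))
       (is_derive_scal _ x a2 _ (is_derive_Rpower c2 x Hx))))) as D.
  match type of D with is_derive _ _ ?d => replace (- s * _) with d end; [exact D|].
  unfold minus, plus, opp, scal, zero; simpl; unfold mult; simpl. ring.
Qed.

Lemma derive_comparison_at_right_0 (g h dg dh : R -> R) (Lg Lh b : R) :
  (forall x, 0 < x <= b -> is_derive g x (dg x)) ->
  (forall x, 0 < x <= b -> is_derive h x (dh x)) ->
  (forall x, 0 < x <= b -> dh x <= dg x) ->
  filterlim g (at_right 0) (locally Lg) ->
  filterlim h (at_right 0) (locally Lh) ->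
  Lh <= Lg -> forall r, 0 < r <= b -> h r <= g r.
Proof.
  intros Dg Dh Hd Lim_g Lim_h HL r Hr.
  assert (gap_mono : forall s, 0 < s < r -> g s - h s <= g r - h r).
  { intros s Hs.
    destruct (MVT_cor2 (fun x => g x - h x) (fun x => dg x - dh x) s r)
      as [c [Hc Hcsr]]; [lra| |].
    - intros c Hc. apply is_derive_Reals, (is_derive_minus g h); [apply Dg | apply Dh]; lra.
    - assert (dh c <= dg c) by (apply Hd; lra).
      assert (0 <= (dg c - dh c) * (r - s)) by (apply Rmult_le_pos; lra). lra. }
  assert (gap_eventually : at_right 0 (fun s => g s - h s <= g r - h r)).
  { apply (filter_imp (fun s => 0 < s < r)); [exact gap_mono|].
    apply at_right_0_between; lra. }
  pose proof (closed_filterlim_loc (FF := Proper_StrongProper _ (at_right_proper_filter 0))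
    (fun x => g x - h x) (fun y => y <= g r - h r) (Lg - Lh)
    (filterlim_Rminus g h Lg Lh Lim_g Lim_h) gap_eventually (closed_le _)).
  lra.
Qed.

Lemma pospow_nonneg (x q : R) : 0 <= pospow x q.
Proof. unfold pospow. destruct (Rlt_dec 0 x); [left; apply exp_pos | lra]. Qed.

Lemma pospow_split (x q : R) : 0 < x -> pospow x q = x * Rpower x (q - 1).
Proof.
  intros Hx. unfold pospow. destruct (Rlt_dec 0 x); [|lra].
  rewrite <- (Rpower_1 x) at 2 by lra. rewrite <- Rpower_plus. f_equal; ring.
Qed.

Lemma pospow_le (x y q : R) : 0 <= q -> x <= y -> pospow x q <= pospow y q.
Proof.
  intros Hq Hxy. unfold pospow.
  destruct (Rlt_dec 0 x), (Rlt_dec 0 y); try lra.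
  - apply Rle_Rpower_l; lra.
  - left; apply exp_pos.
Qed.

Definition radial_flux (n : nat) (v : R -> R) (r : R) : R := r ^ (n - 1) * Derive v r.

Section RadialSolution.

Variables (n : nat) (f : R -> R) (p alpha : R) (v : R -> R).
Hypothesis n_pos : (1 <= n)%nat.
Hypothesis f_nonneg : forall r, 0 < r -> 0 <= f r.
Hypothesis v_sol : radial_solution n f p alpha v.

Lemma radial_flux_derive (r : R) :
  0 < r -> is_derive (radial_flux n v) r (- (r ^ (n - 1) * f r * pospow (v r) p)).
Proof.
  intros Hr. destruct v_sol as (_ & _ & Hode & _).
  destruct (Hode r Hr) as (Dv & DDv & Heq).
  pose proof (is_derive_mult _ _ r _ _ (is_derive_pow _ (n - 1) r _ (is_derive_id r))
    (Derive_correct _ _ DDv) Rmult_comm) as D.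
  match type of D with is_derive _ _ ?d => replace (- _) with d end; [exact D|].
  assert (Hpred : INR (n - 1) * r ^ Init.Nat.pred (n - 1) = INR (n - 1) * r ^ (n - 1) / r).
  { destruct (n - 1)%nat; cbn [pow Nat.pred]; [rewrite INR_0|]; field; lra. }
  unfold plus, mult, one; simpl. rewrite Rmult_1_r, Hpred, minus_INR by lia.
  change (INR 1) with 1.
  replace (Derive (Derive v) r) with
    (- ((INR n - 1) / r * Derive v r) - f r * pospow (v r) p) by lra.
  field. lra.
Qed.

Lemma radial_flux_nonpos (r : R) : 0 < r -> radial_flux n v r <= 0.
Proof.
  intros Hr.
  apply (derive_comparison_at_right_0 (fun _ => 0) (radial_flux n v) (fun _ => 0)
           (fun x => - (x ^ (n - 1) * f x * pospow (v x) p)) 0 0 r); try lra.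
  - intros x _; exact (is_derive_const _ x).
  - intros x Hx; apply radial_flux_derive; lra.
  - intros x Hx.
    assert (0 <= x ^ (n - 1) * f x * pospow (v x) p); [|lra].
    apply Rmult_le_pos; [apply Rmult_le_pos|].
    + apply pow_le; lra.
    + apply f_nonneg; lra.
    + apply pospow_nonneg.
  - apply filterlim_const.
  - apply v_sol.
Qed.

Lemma radial_derive_nonpos (r : R) : 0 < r -> Derive v r <= 0.
Proof.
  intros Hr. pose proof (radial_flux_nonpos r Hr) as H. unfold radial_flux in H.
  pose proof (pow_lt r (n - 1) Hr). nra.
Qed.

Lemma radial_solution_le_initial (r : R) : 0 < r -> v r <= alpha.
Proof.
  intros Hr. destruct v_sol as (_ & Hlim & Hode & _).
  apply (derive_comparison_at_right_0 (fun _ => alpha) v (fun _ => 0) (Derive v) alpha alpha r);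
    try lra.
  - intros x _; exact (is_derive_const _ x).
  - intros x Hx. apply Derive_correct, Hode; lra.
  - intros x Hx. apply radial_derive_nonpos; lra.
  - apply filterlim_const.
  - exact Hlim.
Qed.

End RadialSolution.

Section RadialLowerBound.

Variables (n : nat) (f : R -> R) (p alpha : R) (v : R -> R) (sig C B b : R).
Hypothesis n_ge2 : (2 <= n)%nat.
Hypothesis p_nonneg : 0 <= p.
Hypothesis f_nonneg : forall r, 0 < r -> 0 <= f r.
Hypothesis v_sol : radial_solution n f p alpha v.
Hypothesis sig_gt : -2 < sig.
Hypothesis f_le : forall r, 0 < r <= b -> f r <= C * Rpower r sig + B.

Let A := pospow alpha p.

Let n_ge2_R : 2 <= INR n.
Proof. apply (le_INR 2); assumption. Qed.

Lemma radial_flux_lower_bound (r : R) : 0 < r <= b ->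
  0 - A * (C / (sig + INR n) * Rpower r (sig + INR n) + B / INR n * Rpower r (INR n))
  <= radial_flux n v r.
Proof.
  intros Hr.
  apply (derive_comparison_at_right_0 (radial_flux n v)
    (fun x => 0 - A * (C / (sig + INR n) * Rpower x (sig + INR n) + B / INR n * Rpower x (INR n)))
    (fun x => - (x ^ (n - 1) * f x * pospow (v x) p))
    (fun x => - A * (C / (sig + INR n) * (sig + INR n) * Rpower x (sig + INR n - 1)
                     + B / INR n * INR n * Rpower x (INR n - 1))) 0 0 b); try lra.
  - intros x Hx; apply (radial_flux_derive n f p alpha v); auto with arith; lra.
  - intros x Hx; apply is_derive_sub_powers; lra.
  - intros x Hx.
    assert (Hpow : Rpower x (INR n - 1) = x ^ (n - 1)).
    { rewrite <- Rpower_pow by lra. f_equal. rewrite minus_INR by lia; simpl; ring. }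
    assert (Hpow' : Rpower x (sig + INR n - 1) = Rpower x sig * x ^ (n - 1)).
    { rewrite <- Hpow, <- Rpower_plus. f_equal; ring. }
    rewrite Hpow, Hpow'.
    assert (Hval : pospow (v x) p <= A).
    { apply pospow_le; [lra|].
      apply (radial_solution_le_initial n f p alpha v); auto with arith; lra. }
    pose proof (f_le x Hx). pose proof (f_nonneg x ltac:(lra)).
    pose proof (pospow_nonneg (v x) p). pose proof (pow_lt x (n - 1) ltac:(lra)).
    pose proof (exp_pos (sig * ln x)). unfold Rpower in *.
    assert (f x * pospow (v x) p <= (C * exp (sig * ln x) + B) * A).
    { apply Rle_trans with (f x * A); [apply Rmult_le_compat_l | apply Rmult_le_compat_r]; lra. }
    replace (C / (sig + INR n) * (sig + INR n)) with C by (field; lra).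
    replace (B / INR n * INR n) with B by (field; lra).
    assert (x ^ (n - 1) * (f x * pospow (v x) p)
            <= x ^ (n - 1) * ((C * exp (sig * ln x) + B) * A)) by (apply Rmult_le_compat_l; lra).
    nra.
  - apply v_sol.
  - apply filterlim_sub_powers_at_right_0; lra.
Qed.

Lemma radial_derive_lower_bound (r : R) : 0 < r <= b ->
  - A * (C / (sig + INR n) * Rpower r (sig + 1) + B / INR n * r) <= Derive v r.
Proof.
  intros Hr. pose proof (radial_flux_lower_bound r Hr) as H. unfold radial_flux in H.
  assert (Hpow : Rpower r (INR n) = r ^ (n - 1) * r).
  { rewrite Rpower_pow by lra. replace n with (S (n - 1)) at 1 by lia. simpl; ring. }
  assert (Hpow' : Rpower r (sig + INR n) = Rpower r (sig + 1) * r ^ (n - 1)).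
  { rewrite <- Rpower_pow, <- Rpower_plus by lra. f_equal.
    rewrite minus_INR by lia; simpl; ring. }
  rewrite Hpow, Hpow' in H. pose proof (pow_lt r (n - 1) ltac:(lra)).
  apply (Rmult_le_reg_l (r ^ (n - 1))); [assumption|]. nra.
Qed.

Lemma radial_solution_lower_bound (r : R) : 0 < r <= b ->
  alpha - A * (C / ((sig + INR n) * (sig + 2)) * Rpower r (sig + 2)
               + B / (2 * INR n) * Rpower r 2) <= v r.
Proof.
  intros Hr. destruct v_sol as (_ & Hlim & Hode & _).
  apply (derive_comparison_at_right_0 v
    (fun x => alpha - A * (C / ((sig + INR n) * (sig + 2)) * Rpower x (sig + 2)
                           + B / (2 * INR n) * Rpower x 2)) (Derive v)
    (fun x => - A * (C / ((sig + INR n) * (sig + 2)) * (sig + 2) * Rpower x (sig + 2 - 1)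
                     + B / (2 * INR n) * 2 * Rpower x (2 - 1))) alpha alpha b); try lra.
  - intros x Hx. apply Derive_correct, Hode; lra.
  - intros x Hx; apply is_derive_sub_powers; lra.
  - intros x Hx. eapply Rle_trans; [|apply radial_derive_lower_bound; exact Hx].
    replace (sig + 2 - 1) with (sig + 1) by ring.
    replace (2 - 1) with 1 by ring. rewrite Rpower_1 by lra.
    right; field; lra.
  - exact Hlim.
  - apply filterlim_sub_powers_at_right_0; lra.
Qed.

Lemma radial_solution_uniform_lower_bound (r : R) : 0 <= C -> 0 <= B -> 0 < r <= b ->
  alpha - A * (C / ((sig + INR n) * (sig + 2)) * Rpower b (sig + 2)
               + B / (2 * INR n) * Rpower b 2) <= v r.
Proof.
  intros HC HB Hr. eapply Rle_trans; [|apply radial_solution_lower_bound, Hr].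
  unfold Rminus. apply Rplus_le_compat_l, Ropp_le_contravar, Rmult_le_compat_l.
  - apply pospow_nonneg.
  - apply Rplus_le_compat; apply Rmult_le_compat_l; try (apply Rle_Rpower_l; lra);
      apply Rdiv_le_0_compat; nra.
Qed.

End RadialLowerBound.

Lemma f_le_power_plus_const (f : R -> R) (b : R) :
  hyp_f1 f -> hyp_f2' f -> 0 < b ->
  exists sig C B, -2 < sig /\ 0 <= C /\ 0 <= B /\
    forall r, 0 < r <= b -> f r <= C * Rpower r sig + B.
Proof.
  intros Hf1 (sig & C & del & Hsig & Hdel & Hnear) Hb.
  destruct (continuity_ab_maj f (del / 2) (b + del)) as (xm & Hmax & Hxm); [lra| |].
  { intros c Hc. apply continuity_pt_filterlim, Hf1. lra. }
  exists sig, (Rabs C), (f xm). split; [exact Hsig|]. split; [apply Rabs_pos|].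
  split; [left; apply Hf1; lra|].
  intros r Hr. pose proof (exp_pos (sig * ln r)). pose proof (Rabs_pos C).
  assert (0 < f xm) by (apply Hf1; lra). unfold Rpower in *.
  destruct (Rlt_or_le r del).
  - pose proof (Hnear r ltac:(lra)). pose proof (Rle_abs (f r)).
    pose proof (Rle_abs C). nra.
  - pose proof (Hmax r ltac:(lra)). nra.
Qed.

Lemma r_alpha_k_ge (u : R -> R -> R) (k alpha b : R) :
  (forall r, 0 < r <= b -> u r alpha <> alpha / k) -> Rbar_le b (r_alpha_k u k alpha).
Proof.
  intros Hne. apply Glb_Rbar_correct. intros x (Hx & Hux). simpl.
  destruct (Rle_or_lt x b) as [Hxb|]; [|lra].
  exfalso. exact (Hne x (conj Hx Hxb) Hux).
Qed.

Theorem lemma3p5 (n : nat) (l p : R) (f : R -> R) (u : R -> R -> R) (k : R) :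
  (3 <= n)%nat ->
  -2 < l < 0 ->
  1 < p < (INR n + 2) / (INR n - 2) ->
  hyp_f1 f -> hyp_f2 l f -> hyp_f2' f ->
  (forall alpha, 0 < alpha -> radial_solution n f p alpha (fun r => u r alpha)) ->
  1 < k ->
  forall M : R, at_right 0 (fun alpha => Rbar_lt (Finite M) (r_alpha_k u k alpha)).
Proof.
  intros Hn _ Hp Hf1 _ Hf2' Hsol Hk M.
  set (b := Rmax M 0 + 1).
  assert (HMb : M < b /\ 0 < b) by (pose proof (Rmax_l M 0); pose proof (Rmax_r M 0); unfold b; lra).
  destruct (f_le_power_plus_const f b Hf1 Hf2' (proj2 HMb)) as (sig & C & B & Hsig & HC & HB & Hfb).
  set (K := C / ((sig + INR n) * (sig + 2)) * Rpower b (sig + 2) + B / (2 * INR n) * Rpower b 2).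
  assert (Hk' : 0 < 1 - 1 / k) by (apply Rlt_0_minus, Rlt_div_l; lra).
  assert (Hsmall : at_right 0 (fun alpha => K * Rpower alpha (p - 1) < 1 - 1 / k)).
  { pose proof (filterlim_Rmult_l (F := at_right 0) K _ 0
      (filterlim_Rpower_at_right_0 (p - 1) ltac:(lra))) as Hlim.
    rewrite Rmult_0_r in Hlim. exact (Hlim (fun y => y < 1 - 1 / k) (open_lt _ _ Hk')). }
  generalize (filter_and _ _ (at_right_0_between 1 Rlt_0_1) Hsmall).
  apply filter_imp. intros alpha ((Ha & _) & Hsm).
  apply (Rbar_lt_le_trans _ b); [simpl; lra|].
  apply r_alpha_k_ge. intros r Hr Heq.
  pose proof (radial_solution_uniform_lower_bound n f p alpha (fun r => u r alpha) sig C B b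
    ltac:(lia) ltac:(lra) (fun x Hx => Rlt_le _ _ (proj2 (Hf1 x Hx))) (Hsol alpha Ha)
    Hsig Hfb r HC HB Hr) as Hlow.
  fold K in Hlow. rewrite (pospow_split alpha p Ha), Heq in Hlow.
  assert (alpha * (Rpower alpha (p - 1) * K) < alpha * (1 - 1 / k))
    by (apply Rmult_lt_compat_l; lra).
  unfold Rdiv in *. lra.
Qed.
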